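(* Let $\mathbf A$ be a modular pseudo-Kleene lattice and $x,y\in A$. The following are equivalent: (1) $x\,\mathrm C\,y$; (2) $y\,\mathrm C\,x$; (3) $x\,\mathrm C\,y'$; (4) $x'\,\mathrm C\,y$; (5) $x\,\mathrm C\,y$ and $(x\lor x')\land(y\lor y')=((x\lor x')\land y)\lor((x\lor x')\land y')$.
   Context: A pseudo-Kleene lattice is an algebra $(A,\land,\lor,{}',0,1)$ that is a bounded lattice with an antitone involution ${}'$ ($x\leq y\Rightarrow y'\leq x'$, $x''=x$) satisfying $x\land x'\leq y\lor y'$; it is modular if its lattice reduct is modular. For $a,b\in A$, $a\,\mathrm C\,b$ means: (C1) $a\land(b\lor b')=(a\land b)\lor(a\land b')$; (C2) $b\land(a\lor a')=(b\land a)\lor(b\land a')$; (C3) $a\land a'=((a\land a')\land b)\lor((a\land a')\land b')$. *)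

Record bounded_lattice := BoundedLattice {
  carrier :> Type;
  meet : carrier -> carrier -> carrier;
  join : carrier -> carrier -> carrier;
  bot : carrier;
  top : carrier;
  meetC : forall x y, meet x y = meet y x;
  joinC : forall x y, join x y = join y x;
  meetA : forall x y z, meet x (meet y z) = meet (meet x y) z;
  joinA : forall x y z, join x (join y z) = join (join x y) z;
  meet_absorb : forall x y, meet x (join x y) = x;
  join_absorb : forall x y, join x (meet x y) = x;
  meet_bot : forall x, meet bot x = bot;
  join_top : forall x, join top x = top
}.

Arguments meet {_}.
Arguments join {_}.
Arguments bot {_}.
Arguments top {_}.

Definition lat_le {L : bounded_lattice} (x y : L) : Prop := meet x y = x.

Definition modular (L : bounded_lattice) : Prop :=
  forall x y z : L, lat_le x z -> join x (meet y z) = meet (join x y) z.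

Record pseudo_kleene (L : bounded_lattice) (c : L -> L) : Prop := {
  pk_antitone : forall x y : L, lat_le x y -> lat_le (c y) (c x);
  pk_invol : forall x : L, c (c x) = x;
  pk_kleene : forall x y : L, lat_le (meet x (c x)) (join y (c y))
}.

Definition commutes {L : bounded_lattice} (c : L -> L) (a b : L) : Prop :=
  meet a (join b (c b)) = join (meet a b) (meet a (c b)) /\
  meet b (join a (c a)) = join (meet b a) (meet b (c a)) /\
  meet a (c a) = join (meet (meet a (c a)) b) (meet (meet a (c a)) (c b)).

(* Say that [x] splits along [b] when [x /\ (b \/ b') = (x /\ b) \/ (x /\ b')].
   Then [a C b] means that [a] splits along [b], [b] along [a], and (since
   [a /\ a' <= b \/ b']) [a /\ a'] along [b].  Splitting along [b] is the same
   as splitting along [b'].  In a modular lattice splitting of [x] along [b]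
   forces the dual law [x \/ (b /\ b') = (x \/ b) /\ (x \/ b')], whose De Morgan
   image says that [x'] splits along [b].  So [C] is invariant under ['] in
   each argument, its third condition is equivalent to [a \/ a'] splitting
   along [b], and from this, [a] and [a'] splitting [b], one obtains that
   [b \/ b'] (hence [b /\ b']) splits along [a], which gives symmetry. *)

From Stdlib Require Import Setoid.

Section Lattice.
Context {L : bounded_lattice}.
Implicit Types x y z : L.

Lemma meetxx x : meet x x = x.
Proof. pose proof (meet_absorb L x (meet x x)) as H. rewrite join_absorb in H. exact H. Qed.

Lemma lat_le_refl x : lat_le x x.
Proof. apply meetxx. Qed.

Lemma lat_le_trans x y z : lat_le x y -> lat_le y z -> lat_le x z.
Proof. unfold lat_le; intros Hxy Hyz. rewrite <- Hxy, <- meetA, Hyz. reflexivity. Qed.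

Lemma lat_le_anti x y : lat_le x y -> lat_le y x -> x = y.
Proof. unfold lat_le; intros Hxy Hyx. rewrite <- Hxy, meetC. exact Hyx. Qed.

Lemma lat_le_join x y : lat_le x y -> join x y = y.
Proof. unfold lat_le; intro Hxy. rewrite <- Hxy, joinC, meetC. apply join_absorb. Qed.

Lemma lat_le_meet x y z : lat_le z x -> lat_le z y -> lat_le z (meet x y).
Proof. unfold lat_le; intros Hx Hy. rewrite meetA, Hx, Hy. reflexivity. Qed.

Lemma join_lat_le x y z : lat_le x z -> lat_le y z -> lat_le (join x y) z.
Proof.
  intros Hx Hy.
  assert (E : join (join x y) z = z).
  { rewrite <- joinA, (lat_le_join _ _ Hy), (lat_le_join _ _ Hx). reflexivity. }
  unfold lat_le. rewrite <- E. apply meet_absorb.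
Qed.

Lemma meet_lat_le_l x y z : lat_le x z -> lat_le (meet x y) z.
Proof.
  apply lat_le_trans. unfold lat_le. rewrite meetC, meetA, meetxx. reflexivity.
Qed.

Lemma meet_lat_le_r x y z : lat_le y z -> lat_le (meet x y) z.
Proof. rewrite meetC. apply meet_lat_le_l. Qed.

Lemma lat_le_join_l x y z : lat_le z x -> lat_le z (join x y).
Proof. intro Hzx. apply (lat_le_trans _ _ _ Hzx), meet_absorb. Qed.

Lemma lat_le_join_r x y z : lat_le z y -> lat_le z (join x y).
Proof. rewrite joinC. apply lat_le_join_l. Qed.

End Lattice.

#[local] Hint Resolve lat_le_refl lat_le_meet join_lat_le meet_lat_le_l
  meet_lat_le_r lat_le_join_l lat_le_join_r : lattice.

Ltac lattice := solve [auto 8 with lattice].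

Section ModularLattice.
Context {L : bounded_lattice} (Hmod : modular L).
Implicit Types x y z b d : L.

Lemma modular_cancel x y z :
  lat_le x y -> meet x z = meet y z -> join x z = join y z -> x = y.
Proof.
  intros Hxy Hmeet Hjoin.
  pose proof (Hmod x z y Hxy) as E.
  rewrite Hjoin, (meetC _ (join y z)), meet_absorb, (meetC _ z y), <- Hmeet,
    join_absorb in E.
  exact E.
Qed.

(* Modularity bounds the meet of [x \/ b], [x \/ d] and [b \/ d] by
   [(x /\ b) \/ (x /\ d) \/ (b /\ d)], which lies below [x \/ (b /\ d)]; the two
   sides then agree by cancellation against [b \/ d]. *)
Lemma modular_meet_join_distr x b d :
  meet x (join b d) = join (meet x b) (meet x d) ->
  join x (meet b d) = meet (join x b) (join x d).
Proof.
  intro Hdistr.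
  assert (Hb : lat_le (meet (join x b) (join b d)) (join b (meet x d))).
  { rewrite (joinC _ x b), <- Hmod, Hdistr by lattice. lattice. }
  assert (Hd : lat_le (meet (join x d) (join b d)) (join d (meet x b))).
  { rewrite (joinC _ x d), <- Hmod, Hdistr by lattice. lattice. }
  apply (modular_cancel _ _ (join b d)).
  - lattice.
  - apply lat_le_anti; [lattice|].
    apply lat_le_trans with (meet (join b (meet x d)) (join d (meet x b))).
    { apply lat_le_meet.
      - apply lat_le_trans with (meet (join x b) (join b d)); [lattice | exact Hb].
      - apply lat_le_trans with (meet (join x d) (join b d)); [lattice | exact Hd]. }
    rewrite (meetC _ (join b _)), (joinC _ d), <- (Hmod (meet x b)) by lattice.
    rewrite (meetC _ d), (joinC _ b), <- (Hmod (meet x d)) by lattice.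
    lattice.
  - apply lat_le_anti; lattice.
Qed.

End ModularLattice.

Section PseudoKleene.
Context {L : bounded_lattice} (c : L -> L) (HPK : pseudo_kleene L c).
Implicit Types a b x y : L.

Lemma complK x : c (c x) = x.
Proof. apply (pk_invol _ _ HPK). Qed.

Lemma compl_meet x y : c (meet x y) = join (c x) (c y).
Proof.
  apply lat_le_anti.
  - rewrite <- (complK (join (c x) (c y))). apply (pk_antitone _ _ HPK).
    apply lat_le_meet.
    + rewrite <- (complK x) at 2. apply (pk_antitone _ _ HPK). lattice.
    + rewrite <- (complK y) at 2. apply (pk_antitone _ _ HPK). lattice.
  - apply join_lat_le; apply (pk_antitone _ _ HPK); lattice.
Qed.

Lemma compl_join x y : c (join x y) = meet (c x) (c y).
Proof. rewrite <- (complK (meet (c x) (c y))), compl_meet, !complK. reflexivity. Qed.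

Definition splits (b x : L) : Prop :=
  meet x (join b (c b)) = join (meet x b) (meet x (c b)).

Lemma splitsP b x :
  lat_le (meet x (join b (c b))) (join (meet x b) (meet x (c b))) -> splits b x.
Proof. intro H. apply lat_le_anti; [exact H | lattice]. Qed.

Lemma splits_compl_r b x : splits (c b) x <-> splits b x.
Proof.
  unfold splits. rewrite complK, (joinC _ (c b) b), (joinC _ (meet x (c b))).
  reflexivity.
Qed.

(* The third condition of [C] is a splitting because [a /\ a' <= b \/ b']. *)
Lemma commutesE a b :
  commutes c a b <-> splits b a /\ splits a b /\ splits b (meet a (c a)).
Proof. unfold commutes, splits. rewrite (pk_kleene _ _ HPK a b). reflexivity. Qed.

Section Modular.
Hypothesis Hmod : modular L.

Lemma splits_compl b x : splits b x -> splits b (c x).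
Proof.
  intro H. pose proof (modular_meet_join_distr Hmod _ _ _ H) as E.
  apply (f_equal c) in E.
  rewrite compl_join, compl_meet, compl_meet, !compl_join, complK in E.
  unfold splits. rewrite (joinC _ b), E. apply joinC.
Qed.

Lemma splits_complE b x : splits b (c x) <-> splits b x.
Proof.
  split; [|apply splits_compl].
  intro H. rewrite <- (complK x). apply splits_compl. exact H.
Qed.

Lemma splits_meet_join_compl a b :
  splits b (meet a (c a)) <-> splits b (join a (c a)).
Proof.
  rewrite <- (splits_complE b (meet a (c a))), compl_meet, complK, (joinC _ (c a) a).
  reflexivity.
Qed.

Lemma commutes_splits_meet_compl a b : commutes c a b -> splits a (meet b (c b)).
Proof.
  rewrite commutesE. intros [_ [Hab Hbaa]].
  rewrite splits_meet_join_compl in Hbaa |- *.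
  apply splitsP.
  rewrite (meetC _ (join b (c b))), Hbaa. apply join_lat_le.
  - rewrite (meetC _ (join a (c a)) b), Hab. lattice.
  - rewrite <- splits_complE in Hab.
    rewrite (meetC _ (join a (c a)) (c b)), Hab. lattice.
Qed.

Lemma commutes_sym a b : commutes c a b -> commutes c b a.
Proof.
  intro H. pose proof (commutes_splits_meet_compl _ _ H) as Habb.
  rewrite commutesE in H |- *. tauto.
Qed.

Lemma commutes_compl_r a b : commutes c a (c b) <-> commutes c a b.
Proof. rewrite !commutesE, !splits_compl_r, splits_complE. reflexivity. Qed.

Lemma commutes_compl_l a b : commutes c (c a) b <-> commutes c a b.
Proof.
  rewrite !commutesE, complK, splits_complE, splits_compl_r, (meetC _ (c a) a).
  reflexivity.
Qed.

End Modular.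
End PseudoKleene.

Theorem lemma4p13 (L : bounded_lattice) (c : L -> L)
  (HPK : pseudo_kleene L c) (Hmod : modular L) (x y : L) :
  (commutes c x y <-> commutes c y x) /\
  (commutes c x y <-> commutes c x (c y)) /\
  (commutes c x y <-> commutes c (c x) y) /\
  (commutes c x y <->
     (commutes c x y /\
      meet (join x (c x)) (join y (c y)) =
      join (meet (join x (c x)) y) (meet (join x (c x)) (c y)))).
Proof.
  split; [|split; [|split]].
  - split; apply (commutes_sym c HPK Hmod).
  - symmetry. apply (commutes_compl_r c HPK Hmod).
  - symmetry. apply (commutes_compl_l c HPK Hmod).
  - split; [|tauto]. intro H. split; [exact H|].
    apply (splits_meet_join_compl c HPK Hmod).
    apply (commutesE c HPK) in H. tauto.
Qed.
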